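(* Let $p\ge1$ and let $\mathcal A=(A_n)_{n\ge0}$ be a sequence of positive invertible $p\times p$ matrices with $\sup_n\|A_n\|<\infty$ such that the matrix-valued weighted shift $W_{\mathcal A}$ on $\ell^2(\mathbb C^p)$ is quadratically hyponormal. If $A_n=A_{n+1}$ for some $n\ge1$, then either $A_{n-1}=A_n=A_{n+1}$ or $A_n=A_{n+1}=A_{n+2}$.
   Context: $\ell^2(\mathbb C^p)=\{(x_n)_{n\ge0}: x_n\in\mathbb C^p,\ \sum_n\|x_n\|^2<\infty\}$; the matrix-valued weighted shift is $W_{\mathcal A}(x_0,x_1,\dots)=(0,A_0x_0,A_1x_1,\dots)$. A bounded operator $T$ is hyponormal if $T^*T-TT^*\ge0$, and quadratically hyponormal if $T+\lambda T^2$ is hyponormal for every $\lambda\in\mathbb C$. *)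

From HB Require Import structures.
From mathcomp Require Import all_boot all_order all_algebra.
From mathcomp Require Import complex.
From mathcomp Require Import all_classical all_reals all_analysis.
Import numFieldNormedType.Exports.
Set Implicit Arguments. Unset Strict Implicit. Unset Printing Implicit Defensive.
Import Order.TTheory GRing.Theory Num.Theory.
Local Open Scope ring_scope.

Definition cvec (R : realType) (p : nat) := 'cV[R[i]]_p.
Definition cseq (R : realType) (p : nat) := nat -> 'cV[R[i]]_p.

Definition adjmx (R : realType) m n (A : 'M[R[i]]_(m, n)) : 'M[R[i]]_(n, m) :=
  \matrix_(i, j) (A j i)^*%C.

Definition vinner (R : realType) p (u v : 'cV[R[i]]_p) : R[i] :=
  \sum_(k < p) u k 0 * (v k 0)^*%C.

Definition vsqnorm (R : realType) p (u : 'cV[R[i]]_p) : R :=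
  \sum_(k < p) (complex.Re (u k 0) ^+ 2 + complex.Im (u k 0) ^+ 2).

Definition in_l2 (R : realType) p (x : cseq R p) : Prop :=
  cvgn (series (fun n => vsqnorm (x n))).

Definition l2inner (R : realType) p (x y : cseq R p) : R[i] :=
  Complex (limn (series (fun n => complex.Re (vinner (x n) (y n)))))
          (limn (series (fun n => complex.Im (vinner (x n) (y n))))).

Definition is_adjoint (R : realType) p (T S : cseq R p -> cseq R p) : Prop :=
  (forall x, in_l2 x -> in_l2 (S x)) /\
  forall x y, in_l2 x -> in_l2 y -> l2inner (T x) y = l2inner x (S y).

Definition hyponormal (R : realType) p (T : cseq R p -> cseq R p) : Prop :=
  exists S, is_adjoint T S /\
    forall x, in_l2 x ->
      0 <= l2inner (fun n => S (T x) n - T (S x) n) x.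

Definition quad_hyponormal (R : realType) p (T : cseq R p -> cseq R p) : Prop :=
  forall lam : R[i], hyponormal (fun x n => T x n + lam *: T (T x) n).

Definition mw_shift (R : realType) p (A : nat -> 'M[R[i]]_p) (x : cseq R p) : cseq R p :=
  fun n => if n is m.+1 then A m *m x m else 0.

Definition posmx (R : realType) p (A : 'M[R[i]]_p) : Prop :=
  adjmx A = A /\ forall v : 'cV[R[i]]_p, 0 <= vinner (A *m v) v.

Definition bounded_seq_mx (R : realType) p (A : nat -> 'M[R[i]]_p) : Prop :=
  exists M : R, forall n (v : 'cV[R[i]]_p), vsqnorm (A n *m v) <= M ^+ 2 * vsqnorm v.

From HB Require Import structures.
From mathcomp Require Import all_boot all_order all_algebra.
From mathcomp Require Import complex.
From mathcomp Require Import all_classical all_reals all_analysis.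
From mathcomp Require Import ring lra zify.
Import numFieldNormedType.Exports.
Import Order.TTheory GRing.Theory Num.Theory.
Local Open Scope ring_scope.
Local Open Scope complex_scope.
Set Implicit Arguments. Unset Strict Implicit.

(* Let B := A_(m+1) = A_(m+2) and K := A_(m+3), and take lam = -eps real.  On a
   finitely supported x the adjoint of T := W + lam W^2 is explicit, and
   hyponormality says |T^* x|^2 <= |T x|^2.  For a suitable x supported on
   m, ..., m+4 the defect |T x|^2 - |T^* x|^2 equals
   - eps^4 |K^2 Y - B^2 Y|^2 + O(eps^6); letting eps -> 0 forces K^2 Y = B^2 Y
   for every Y.  Positive square roots are unique (B is invertible), so K = B:
   the second alternative of the theorem always holds. *)

Lemma le0_of_forall_leM (R : realFieldType) (x c : R) :
  (forall t, 0 < t -> x <= t * c) -> x <= 0.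
Proof.
move=> h; apply/ler_addgt0Pr => e e0; rewrite add0r.
have d0 : 0 < `|c| + 1 by rewrite ltr_wpDl.
apply: (le_trans (h _ (divr_gt0 e0 d0))).
rewrite mulrAC ler_pdivrMr // ler_wpM2l ?ltW //.
by rewrite (le_lt_trans (ler_norm c)) // ltrDl.
Qed.

Section InnerProduct.
Variables (R : realType) (p : nat).
Implicit Types (u v w : 'cV[R[i]]_p) (M : 'M[R[i]]_p).

Lemma vinnerDl u v w : vinner (u + v) w = vinner u w + vinner v w.
Proof. by rewrite /vinner -big_split; apply: eq_bigr => k _; rewrite mxE mulrDl. Qed.

Lemma vinnerDr u v w : vinner u (v + w) = vinner u v + vinner u w.
Proof. by rewrite /vinner -big_split; apply: eq_bigr => k _; rewrite mxE rmorphD mulrDr. Qed.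

Lemma vinnerZl a u v : vinner (a *: u) v = a * vinner u v.
Proof. by rewrite /vinner mulr_sumr; apply: eq_bigr => k _; rewrite mxE mulrA. Qed.

Lemma vinnerZr a u v : vinner u (a *: v) = a^*%C * vinner u v.
Proof. by rewrite /vinner mulr_sumr; apply: eq_bigr => k _; rewrite mxE rmorphM mulrCA. Qed.

Lemma vinner0l v : vinner 0 v = 0.
Proof. by rewrite -(scale0r 0) vinnerZl mul0r. Qed.

Lemma vinner0r v : vinner v 0 = 0.
Proof. by rewrite -(scale0r 0) vinnerZr rmorph0 mul0r. Qed.

Lemma vinnerNl u v : vinner (- u) v = - vinner u v.
Proof. by rewrite -scaleN1r vinnerZl mulN1r. Qed.

Lemma vinnerNr u v : vinner u (- v) = - vinner u v.
Proof. by rewrite -scaleN1r vinnerZr rmorphN rmorph1 mulN1r. Qed.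

Lemma vinnerBl u v w : vinner (u - v) w = vinner u w - vinner v w.
Proof. by rewrite vinnerDl vinnerNl. Qed.

Lemma vinnerBr u v w : vinner u (v - w) = vinner u v - vinner u w.
Proof. by rewrite vinnerDr vinnerNr. Qed.

Lemma vinner_mulmx M u v : vinner (M *m u) v = vinner u (adjmx M *m v).
Proof.
rewrite /vinner; under eq_bigr do rewrite mxE big_distrl /=.
rewrite exchange_big /=; apply: eq_bigr => j _.
rewrite mxE rmorph_sum mulr_sumr; apply: eq_bigr => k _.
by rewrite !mxE rmorphM /= conjcK mulrCA mulrA.
Qed.

Lemma vinner_herm M u v : adjmx M = M -> vinner (M *m u) v = vinner u (M *m v).
Proof. by move=> hM; rewrite vinner_mulmx hM. Qed.

Lemma vinner_self u : vinner u u = (vsqnorm u)%:C.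
Proof.
rewrite /vinner /vsqnorm rmorph_sum; apply: eq_bigr => k _.
by case: (u k 0) => a b; apply/eqP; rewrite eq_complex /=; apply/andP; split; apply/eqP; ring.
Qed.

Lemma vsqnorm0 : vsqnorm (0 : 'cV[R[i]]_p) = 0.
Proof. by rewrite /vsqnorm big1 // => k _; rewrite mxE expr0n addr0. Qed.

Lemma sum_vinner_self n (F : 'I_n -> 'cV[R[i]]_p) :
  \sum_(i < n) vinner (F i) (F i) = (\sum_(i < n) vsqnorm (F i))%:C.
Proof. by rewrite rmorph_sum; apply: eq_bigr => i _; apply: vinner_self. Qed.

Lemma vsqnorm_ge0 u : 0 <= vsqnorm u.
Proof. by apply: sumr_ge0 => k _; rewrite addr_ge0 ?sqr_ge0. Qed.

Lemma vsqnorm_eq0 u : vsqnorm u = 0 -> u = 0.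
Proof.
move=> /eqP; rewrite psumr_eq0 => [/allP u0|k _]; last by rewrite addr_ge0 ?sqr_ge0.
apply/colP => k; have := u0 k (mem_index_enum _).
rewrite paddr_eq0 ?sqr_ge0 // !sqrf_eq0 mxE.
by case: (u k 0) => a b /andP[/eqP /= -> /eqP ->].
Qed.

Lemma vinnerIr u v : (forall w, vinner w u = vinner w v) -> u = v.
Proof.
move=> uv; apply/eqP; rewrite -subr_eq0; apply/eqP/vsqnorm_eq0/complexI.
by rewrite -vinner_self vinnerBr uv subrr.
Qed.

End InnerProduct.

Section PositiveMatrices.
Variables (R : realType) (p : nat).
Implicit Types (w : 'cV[R[i]]_p) (P Q X K B : 'M[R[i]]_p).

(* With u := P w, [0 <= <P (w - s u), w - s u> = s^2 <P u, u> - 2 s |u|^2]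
   for every s > 0. *)
Lemma posmx_form_eq0 P w : posmx P -> vinner (P *m w) w = 0 -> P *m w = 0.
Proof.
move=> [hP P_ge0] Pww0; set u := P *m w.
set c := complex.Re (vinner (P *m u) u).
have uPu : vinner (P *m u) u = c%:C by rewrite RRe_real // ger0_real.
suff : vsqnorm u <= 0 by move=> q0; apply/vsqnorm_eq0/eqP; rewrite eq_le q0 vsqnorm_ge0.
apply: (le0_of_forall_leM (c := c / 2)) => s s0.
have := P_ge0 (w - s%:C *: u).
have -> : vinner (P *m (w - s%:C *: u)) (w - s%:C *: u) = (s ^+ 2 * c - 2 * s * vsqnorm u)%:C.
  rewrite mulmxBr -scalemxAr -/u !(vinnerBl, vinnerBr, vinnerZl, vinnerZr) Pww0.
  rewrite (vinner_herm u w hP) -/u uPu vinner_self conjc_real.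
  by rewrite rmorphB !rmorphM rmorph_nat; ring.
by rewrite ler0c subr_ge0 => h; rewrite -(ler_pM2l s0); lra.
Qed.

Lemma mxtrace_adjmx_mul X Q :
  \tr (adjmx X *m Q) = \sum_(j < p) vinner (Q *m delta_mx j 0) (X *m delta_mx j 0).
Proof.
apply: eq_bigr => j _; rewrite /vinner mxE; apply: eq_bigr => k _.
by rewrite -!colE !mxE mulrC.
Qed.

Lemma mulmx_cVP P Q : (forall v : 'cV[R[i]]_p, P *m v = Q *m v) -> P = Q.
Proof.
move=> PQ; apply/matrixP => i j; have /colP/(_ i) := PQ (delta_mx j 0).
by rewrite -!colE !mxE.
Qed.

(* With X := K - B, K^2 = B^2 gives K X = - X B, so tr(X K X) + tr(X B X) = 0 with
   both traces nonnegative; hence B vanishes on the columns of X. *)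
Lemma posmx_sqr_inj K B : posmx K -> posmx B -> B \in unitmx ->
  K *m K = B *m B -> K = B.
Proof.
move=> [hK K_ge0] [hB B_ge0] uB KKBB.
have hX : adjmx (K - B) = K - B.
  by rewrite -{2}hK -{2}hB; apply/matrixP => i j; rewrite !mxE rmorphB.
set X := K - B in hX *.
have KX : K *m X = - (X *m B) by rewrite mulmxBr mulmxBl KKBB opprB.
pose w j : 'cV[R[i]]_p := X *m delta_mx j 0.
have form_sum M : \sum_(j < p) vinner (M *m w j) (w j) = \tr (X *m (M *m X)).
  by rewrite -{1}hX mxtrace_adjmx_mul; apply: eq_bigr => j _; rewrite !mulmxA.
have : \sum_(j < p) vinner (K *m w j) (w j) + \sum_(j < p) vinner (B *m w j) (w j) = 0.
  by rewrite !form_sum KX mulmxN raddfN /= mulmxA mxtrace_mulC -!mulmxA addNr.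
move/eqP; rewrite paddr_eq0 ?sumr_ge0 // => /andP[_].
rewrite psumr_eq0 // => /allP Bw0.
have w0 j : w j = 0.
  have /eqP/(posmx_form_eq0 (conj hB B_ge0)) := Bw0 j (mem_index_enum _).
  by move=> Bw; rewrite -(mulKmx uB (w j)) Bw mulmx0.
apply/eqP; rewrite -subr_eq0 -/X; apply/eqP/matrixP => i j.
by have /colP/(_ i) := w0 j; rewrite /w -colE !mxE.
Qed.

End PositiveMatrices.

Section FiniteSupport.
Local Open Scope classical_set_scope.
Variables (R : realType) (p : nat).
Implicit Types (u v w x : cseq R p).

Definition finsupp N x := forall k, (N <= k)%N -> x k = 0.

Definition vanishes_below m x := forall k, (k < m)%N -> x k = 0.

Definition pinner N u v : R[i] := \sum_(k < N) vinner (u k) (v k).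

Lemma pinnerDl N u v w : pinner N (fun k => u k + v k) w = pinner N u w + pinner N v w.
Proof. by rewrite /pinner -big_split; apply: eq_bigr => k _; rewrite vinnerDl. Qed.

Lemma pinnerBl N u v w : pinner N (fun k => u k - v k) w = pinner N u w - pinner N v w.
Proof. by rewrite /pinner -sumrB; apply: eq_bigr => k _; rewrite vinnerBl. Qed.

Lemma pinnerZl N a u w : pinner N (fun k => a *: u k) w = a * pinner N u w.
Proof. by rewrite /pinner mulr_sumr; apply: eq_bigr => k _; rewrite vinnerZl. Qed.

Lemma pinnerDr N u v w : pinner N w (fun k => u k + v k) = pinner N w u + pinner N w v.
Proof. by rewrite /pinner -big_split; apply: eq_bigr => k _; rewrite vinnerDr. Qed.

Lemma pinnerZr N a u w : pinner N w (fun k => a *: u k) = a^*%C * pinner N w u.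
Proof. by rewrite /pinner mulr_sumr; apply: eq_bigr => k _; rewrite vinnerZr. Qed.

Lemma pinner_widen N M u v : (forall k, (N <= k)%N -> vinner (u k) (v k) = 0) ->
  (N <= M)%N -> pinner M u v = pinner N u v.
Proof.
move=> uv0 NM; rewrite /pinner (big_ord_widen M (fun k => vinner (u k) (v k)) NM).
by rewrite [RHS]big_mkcond; apply: eq_bigr => k _; case: ltnP => // /uv0.
Qed.

Lemma pinner_finsuppl N M u v : finsupp N u -> (N <= M)%N -> pinner M u v = pinner N u v.
Proof. by move=> u0; apply: pinner_widen => k /u0 ->; rewrite vinner0l. Qed.

Lemma pinner_finsuppr N M u v : finsupp N v -> (N <= M)%N -> pinner M u v = pinner N u v.
Proof. by move=> v0; apply: pinner_widen => k /v0 ->; rewrite vinner0r. Qed.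

Lemma series_finsupp (f : R^nat) N : (forall k, (N <= k)%N -> f k = 0) ->
  cvgn (series f) /\ limn (series f) = \sum_(k < N) f k.
Proof.
move=> f0; have fN : \forall n \near \oo, series f n = \sum_(k < N) f k.
  exists N => // n /= Nn; rewrite /series /= big_mkord.
  rewrite (big_ord_widen n f Nn) [RHS]big_mkcond; apply: eq_bigr => k _.
  by case: ltnP => // /f0.
by split; [exact: is_cvg_near_cst fN | exact: lim_near_cst].
Qed.

Lemma in_l2_finsupp N x : finsupp N x -> in_l2 x.
Proof.
move=> x0; have [] // := series_finsupp (f := fun n => vsqnorm (x n)) (N := N).
by move=> k /x0 ->; rewrite vsqnorm0.
Qed.

Lemma l2inner_finsupp N u v : (forall k, (N <= k)%N -> vinner (u k) (v k) = 0) ->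
  l2inner u v = pinner N u v.
Proof.
move=> uv0; rewrite /l2inner.
have [_ ->] := series_finsupp (fun k Nk => congr1 (@complex.Re R) (uv0 k Nk)).
have [_ ->] := series_finsupp (fun k Nk => congr1 (@complex.Im R) (uv0 k Nk)).
rewrite -(raddf_sum (@complex.Re R : Rcomplex R -> R)).
rewrite -(raddf_sum (@complex.Im R : Rcomplex R -> R)).
by rewrite /pinner; case: (\sum_(k < N) _).
Qed.

End FiniteSupport.

Section QuadraticShift.
Variables (R : realType) (p : nat) (A : nat -> 'M[R[i]]_p).
Hypothesis A_herm : forall k, adjmx (A k) = A k.
Implicit Types (b c x : cseq R p) (lam : R[i]).
Local Notation W := (mw_shift A).

Definition mw_shift_adj x : cseq R p := fun k => A k *m x k.+1.
Local Notation Wadj := mw_shift_adj.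

Definition qshift lam x : cseq R p := fun k => W x k + lam *: W (W x) k.

Definition qshift_adj lam x : cseq R p := fun k => Wadj x k + lam^*%C *: Wadj (Wadj x) k.

Lemma finsupp_shift N x : finsupp N x -> finsupp N.+1 (W x).
Proof. by move=> x0 [|k] // /x0 /= ->; rewrite mulmx0. Qed.

Lemma finsupp_shift_adj N x : finsupp N x -> finsupp N (Wadj x).
Proof. by move=> x0 k Nk; rewrite /mw_shift_adj x0 ?mulmx0 // ltnW. Qed.

Lemma finsupp_qshift N lam x : finsupp N x -> finsupp N.+2 (qshift lam x).
Proof.
move=> /finsupp_shift x0 k Nk.
by rewrite /qshift (finsupp_shift x0) ?x0 ?scaler0 ?addr0 // ltnW.
Qed.

Lemma finsupp_qshift_adj N lam x : finsupp N x -> finsupp N (qshift_adj lam x).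
Proof.
move=> /finsupp_shift_adj x0 k Nk.
by rewrite /qshift_adj (finsupp_shift_adj x0) ?x0 ?scaler0 ?addr0.
Qed.

Lemma vanishes_below_shift m x : vanishes_below m x -> vanishes_below m.+1 (W x).
Proof. by move=> x0 [|k] // /x0 /= ->; rewrite mulmx0. Qed.

Lemma vanishes_below_qshift m lam x :
  vanishes_below m x -> vanishes_below m.+1 (qshift lam x).
Proof.
move=> /vanishes_below_shift x0 k km.
by rewrite /qshift x0 // (vanishes_below_shift x0) ?scaler0 ?addr0 // ltnW.
Qed.

Lemma pinner_shift_adjl N b x : pinner N (Wadj b) x = pinner N.+1 b (W x).
Proof.
rewrite /pinner big_ord_recl /= vinner0r add0r.
by apply: eq_bigr => k _; rewrite (vinner_herm _ _ (A_herm k)).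
Qed.

Lemma pinner_shiftl N c x : pinner N.+1 (W c) x = pinner N c (Wadj x).
Proof.
rewrite /pinner big_ord_recl /= vinner0l add0r.
by apply: eq_bigr => k _; rewrite (vinner_herm _ _ (A_herm k)).
Qed.

Lemma pinner_qshift_adjl N lam b x : finsupp N x ->
  pinner N (qshift_adj lam b) x = pinner N.+2 b (qshift lam x).
Proof.
move=> x0; rewrite pinnerDl pinnerZl !pinner_shift_adjl pinnerDr pinnerZr.
by rewrite (pinner_finsuppr (M := N.+2) _ (finsupp_shift x0)).
Qed.

Lemma pinner_qshiftl N lam c x : finsupp N x ->
  pinner N.+2 (qshift lam c) x = pinner N.+2 c (qshift_adj lam x).
Proof.
move=> x0; rewrite pinnerDl pinnerZl !pinner_shiftl pinnerDr pinnerZr conjcK.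
have x1 := finsupp_shift_adj x0; have x2 := finsupp_shift_adj x1.
rewrite !(pinner_finsuppr (M := N.+1) _ x1, pinner_finsuppr (M := N.+2) _ x1,
  pinner_finsuppr (M := N.+1) _ x2, pinner_finsuppr (M := N.+2) _ x2) //; lia.
Qed.

(* Test against the sequence equal to [c] at [k] and to [0] elsewhere. *)
Lemma qshift_adjE lam S : is_adjoint (qshift lam) S ->
  forall N b, finsupp N b -> S b = qshift_adj lam b.
Proof.
move=> [_ adjS] N b b0; apply/funext => k; apply: vinnerIr => c.
pose a : cseq R p := fun j => if j == k then c else 0.
have a0 : finsupp k.+1 a by move=> j kj; rewrite /a ifN // neq_ltn kj orbT.
have pinner_a w : pinner k.+1 a w = vinner c (w k).
  rewrite /pinner big_ord_recr /= /a eqxx big1 ?add0r // => j _.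
  by rewrite ifN ?vinner0l // neq_ltn ltn_ord.
have b1 : finsupp (N + k.+1)%N b by move=> j Nj; rewrite b0 //; lia.
have := adjS a b (in_l2_finsupp a0) (in_l2_finsupp b0).
rewrite [l2inner a _](l2inner_finsupp (N := k.+1)); last by move=> j /a0 ->; rewrite vinner0l.
rewrite pinner_a => <-.
rewrite (l2inner_finsupp (N := (N + k.+1)%N.+2)); last first.
  by move=> j Nj; rewrite (finsupp_qshift lam a0) ?vinner0l //; lia.
by rewrite pinner_qshiftl // (pinner_finsuppl _ a0) ?pinner_a //; lia.
Qed.

Lemma qshift_hyponormal_finsupp lam N x : hyponormal (qshift lam) -> finsupp N x ->
  \sum_(k < N) vsqnorm (qshift_adj lam x k) <= \sum_(k < N.+2) vsqnorm (qshift lam x k).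
Proof.
move=> [S [adjS S_pos]] x0.
have x2 : finsupp N.+2 x by move=> k Nk; rewrite x0 //; lia.
have := S_pos x (in_l2_finsupp x0).
rewrite (l2inner_finsupp (N := N.+2)); last by move=> k /x2 ->; rewrite vinner0r.
rewrite pinnerBl (qshift_adjE adjS (finsupp_qshift lam x0)) (qshift_adjE adjS x0).
rewrite (pinner_qshiftl lam (qshift_adj lam x) x0) pinner_qshift_adjl //.
rewrite (pinner_finsuppl _ (finsupp_qshift lam x0)); last lia.
rewrite (pinner_finsuppl _ (finsupp_qshift_adj lam x0)); last lia.
by rewrite /pinner !sum_vinner_self -rmorphB ler0c subr_ge0.
Qed.

Lemma qshift_hyponormal_window lam m L x : hyponormal (qshift lam) ->
  vanishes_below m x -> finsupp (m + L)%N x ->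
  \sum_(i < L) vsqnorm (qshift_adj lam x (m + i)%N) <=
  \sum_(i < L.+2) vsqnorm (qshift lam x (m + i)%N).
Proof.
move=> hyp x_lo x_hi; have := qshift_hyponormal_finsupp hyp x_hi.
have W_lo : \sum_(k < m) vsqnorm (qshift lam x k) = 0.
  by rewrite big1 // => k _; rewrite (vanishes_below_qshift lam x_lo (ltnW (ltn_ord k))) vsqnorm0.
rewrite -!addnS !big_split_ord /= W_lo add0r; apply: le_trans.
by rewrite lerDr sumr_ge0 // => k _; apply: vsqnorm_ge0.
Qed.

End QuadraticShift.

Section Window.
Variables (R : realType) (p : nat) (A : nat -> 'M[R[i]]_p).
Implicit Types (s : seq 'cV[R[i]]_p) (lam : R[i]).

Definition window m s : cseq R p := fun k => if (k < m)%N then 0 else nth 0 s (k - m).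

Lemma window_at m s i : window m s (m + i)%N = nth 0 s i.
Proof. by rewrite /window ltnNge leq_addr /= addKn. Qed.

Lemma vanishes_below_window m s : vanishes_below m (window m s).
Proof. by move=> k km; rewrite /window km. Qed.

Lemma finsupp_window m s : finsupp (m + size s)%N (window m s).
Proof.
move=> k mk; rewrite /window ltnNge (leq_trans (leq_addr _ _) mk) /=.
by rewrite nth_default // leq_subRL // (leq_trans (leq_addr _ _) mk).
Qed.

Lemma qshift_window1 lam m s : qshift A lam (window m s) (m + 1)%N = A m *m nth 0 s 0.
Proof.
have := window_at m s 0; rewrite addn0 /qshift addn1 /= => ->.
by rewrite (vanishes_below_shift A (vanishes_below_window (m := m) s) (ltnSn m)) mulmx0 scaler0 addr0.
Qed.

Lemma qshift_window lam m s i : qshift A lam (window m s) (m + i.+2)%N =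
  A (m + i.+1)%N *m nth 0 s i.+1 + lam *: (A (m + i.+1)%N *m (A (m + i)%N *m nth 0 s i)).
Proof. by rewrite /qshift !addnS /= -!addnS !window_at. Qed.

Lemma qshift_adj_window lam m s i : qshift_adj A lam (window m s) (m + i)%N =
  A (m + i)%N *m nth 0 s i.+1 + lam^*%C *: (A (m + i)%N *m (A (m + i.+1)%N *m nth 0 s i.+2)).
Proof. by rewrite /qshift_adj /mw_shift_adj -!addnS !window_at. Qed.

End Window.

Section FlatDefect.
Variables (R : realType) (p : nat) (A : nat -> 'M[R[i]]_p).
Hypothesis A_herm : forall k, adjmx (A k) = A k.
Variables (m : nat) (eps : R) (Y z y : 'cV[R[i]]_p).
Hypotheses (flat : A m.+1 = A m.+2) (Az : A m *m z = A m.+2 *m (A m.+2 *m Y))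
  (By : A m.+2 *m y = Y).

(* With [lam = - eps], the components of [qshift] at [m + 4], [m + 5] vanish and
   the one at [m + 3] equals that of [qshift_adj] at [m + 1]; what survives of
   the defect is of order [eps ^+ 4] and [eps ^+ 6]. *)
Definition flat_test_seq : seq 'cV[R[i]]_p :=
  [:: eps%:C ^+ 2 *: z; eps%:C *: Y; y; eps%:C *: Y; eps%:C ^+ 2 *: (A m.+3 *m Y)].

Lemma flat_defectC :
  \sum_(i < 7) vinner (qshift A (- eps%:C) (window m flat_test_seq) (m + i)%N)
                      (qshift A (- eps%:C) (window m flat_test_seq) (m + i)%N) -
  \sum_(i < 5) vinner (qshift_adj A (- eps%:C) (window m flat_test_seq) (m + i)%N)
                      (qshift_adj A (- eps%:C) (window m flat_test_seq) (m + i)%N) =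
  - (eps%:C ^+ 4 * vinner (A m.+3 *m (A m.+3 *m Y) - A m.+2 *m (A m.+2 *m Y))
                          (A m.+3 *m (A m.+3 *m Y) - A m.+2 *m (A m.+2 *m Y))) +
  eps%:C ^+ 6 * (vinner (A m.+2 *m (A m.+2 *m (A m.+2 *m Y)))
                        (A m.+2 *m (A m.+2 *m (A m.+2 *m Y))) +
                 vinner (A m.+4.+1 *m (A m.+4 *m (A m.+3 *m Y)))
                        (A m.+4.+1 *m (A m.+4 *m (A m.+3 *m Y))) -
                 vinner (A m.+2 *m (A m.+3 *m (A m.+3 *m Y)))
                        (A m.+2 *m (A m.+3 *m (A m.+3 *m Y)))).
Proof.
have cJ1 : (eps%:C)^*%C = eps%:C := conjc_real eps.
have cJ2 : (eps%:C ^+ 2)^*%C = eps%:C ^+ 2 by rewrite -rmorphXn conjc_real.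
have cJN : (- eps%:C)^*%C = - eps%:C by rewrite -rmorphN conjc_real.
rewrite !big_ord_recl !big_ord0 /= /bump /= !add1n.
rewrite !qshift_window !qshift_adj_window qshift_window1 addn0 cJN.
rewrite (vanishes_below_qshift A _ (vanishes_below_window (m := m) flat_test_seq) (ltnSn m)).
rewrite !addnS !addn0 /flat_test_seq; cbn [nth].
rewrite flat -!scalemxAr Az By !mulmx0 !scaler0.
have hB := A_herm m.+2.
have r1 : vinner (A m.+2 *m Y) (A m.+2 *m (A m.+2 *m (A m.+2 *m Y))) =
          vinner (A m.+2 *m (A m.+2 *m Y)) (A m.+2 *m (A m.+2 *m Y)).
  by rewrite -(vinner_herm _ _ hB).
have r2 : vinner (A m.+2 *m (A m.+2 *m (A m.+2 *m Y))) (A m.+2 *m Y) =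
          vinner (A m.+2 *m (A m.+2 *m Y)) (A m.+2 *m (A m.+2 *m Y)).
  by rewrite (vinner_herm _ _ hB).
have r3 : vinner (A m.+2 *m Y) (A m.+2 *m (A m.+3 *m (A m.+3 *m Y))) =
          vinner (A m.+2 *m (A m.+2 *m Y)) (A m.+3 *m (A m.+3 *m Y)).
  by rewrite -(vinner_herm _ _ hB).
have r4 : vinner (A m.+2 *m (A m.+3 *m (A m.+3 *m Y))) (A m.+2 *m Y) =
          vinner (A m.+3 *m (A m.+3 *m Y)) (A m.+2 *m (A m.+2 *m Y)).
  by rewrite (vinner_herm _ _ hB).
(* Abstracting the vectors keeps unification from unfolding matrix products
   while the inner products are expanded. *)
move: r1 r2 r3 r4 cJ1 cJ2 cJN.
move: (A m.+2 *m (A m.+2 *m (A m.+2 *m Y))) (A m.+2 *m (A m.+3 *m (A m.+3 *m Y))) => a3 bk.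
move: (A m.+4.+1 *m (A m.+4 *m (A m.+3 *m Y))) => l1.
move: (A m.+2 *m (A m.+2 *m Y)) (A m.+3 *m (A m.+3 *m Y)) (A m.+4 *m (A m.+3 *m Y)) => a2 k2 m1.
move: (A m.+2 *m Y) (A m.+3 *m Y) (A m *m Y) (eps%:C) => a1 k1 h E.
move=> r1 r2 r3 r4 cJ1 cJ2 cJN.
rewrite !(vinnerDl, vinnerDr, vinnerNl, vinnerNr, vinnerZl, vinnerZr, vinner0l, vinner0r).
by rewrite !cJ1 !cJ2 !cJN r1 r2 r3 r4; ring.
Qed.

Lemma flat_defect :
  \sum_(i < 7) vsqnorm (qshift A (- eps%:C) (window m flat_test_seq) (m + i)%N) -
  \sum_(i < 5) vsqnorm (qshift_adj A (- eps%:C) (window m flat_test_seq) (m + i)%N) =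
  - (eps ^+ 4 * vsqnorm (A m.+3 *m (A m.+3 *m Y) - A m.+2 *m (A m.+2 *m Y))) +
  eps ^+ 6 * (vsqnorm (A m.+2 *m (A m.+2 *m (A m.+2 *m Y))) +
              vsqnorm (A m.+4.+1 *m (A m.+4 *m (A m.+3 *m Y))) -
              vsqnorm (A m.+2 *m (A m.+3 *m (A m.+3 *m Y)))).
Proof.
have sumC n (F : 'I_n -> 'cV[R[i]]_p) :
    (real_complex R : {rmorphism R -> R[i]}) (\sum_(i < n) vsqnorm (F i)) =
    \sum_(i < n) vinner (F i) (F i) by rewrite sum_vinner_self.
have rhsC (u1 u2 u3 u4 : 'cV[R[i]]_p) :
    (- (eps ^+ 4 * vsqnorm u1) + eps ^+ 6 * (vsqnorm u2 + vsqnorm u3 - vsqnorm u4))%:C =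
    - (eps%:C ^+ 4 * vinner u1 u1) +
    eps%:C ^+ 6 * (vinner u2 u2 + vinner u3 u3 - vinner u4 u4).
  by rewrite !vinner_self rmorphD rmorphN !rmorphM rmorphB rmorphD.
by apply: complexI; rewrite rmorphB !sumC rhsC flat_defectC.
Qed.

End FlatDefect.

Lemma quad_hyponormal_flat_sqr (R : realType) p (A : nat -> 'M[R[i]]_p) :
  (forall k, adjmx (A k) = A k) -> (forall k, A k \in unitmx) ->
  quad_hyponormal (mw_shift A) ->
  forall m, A m.+1 = A m.+2 -> A m.+3 *m A m.+3 = A m.+2 *m A m.+2.
Proof.
move=> A_herm A_unit qh m flat; apply: mulmx_cVP => Y; rewrite -!mulmxA.
set B := A m.+2; set K := A m.+3.
suff d_le0 : vsqnorm (K *m (K *m Y) - B *m (B *m Y)) <= 0.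
  apply/eqP; rewrite -subr_eq0; apply/eqP/vsqnorm_eq0.
  by apply/eqP; rewrite eq_le d_le0 vsqnorm_ge0.
apply: (le0_of_forall_leM (c := vsqnorm (B *m (B *m (B *m Y))) +
  vsqnorm (A m.+4.+1 *m (A m.+4 *m (K *m Y))) - vsqnorm (B *m (K *m (K *m Y))))).
move=> t t0; set eps := Num.sqrt t.
have Az : A m *m (invmx (A m) *m (B *m (B *m Y))) = B *m (B *m Y).
  by rewrite mulKVmx ?A_unit.
have By : B *m (invmx B *m Y) = Y by rewrite mulKVmx ?A_unit.
set s := flat_test_seq A m eps Y (invmx (A m) *m (B *m (B *m Y))) (invmx B *m Y).
have := qshift_hyponormal_window A_herm (qh (- eps%:C)) (vanishes_below_window s)
  (finsupp_window (m := m) (s := s)).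
rewrite -subr_ge0 (flat_defect A_herm eps flat Az By).
have t2 : 0 < t ^+ 2 by rewrite exprn_gt0.
rewrite -[4%N]/(2 * 2)%N -[6%N]/(2 * 3)%N !exprM (sqr_sqrtr (ltW t0)) addrC subr_ge0.
by move=> h; rewrite -(ler_pM2l t2) mulrA -exprSr.
Qed.

Theorem mainTheorem5 (R : realType) (p : nat) (A : nat -> 'M[R[i]]_p) :
  (0 < p)%N ->
  (forall n, posmx (A n) /\ A n \in unitmx) ->
  bounded_seq_mx A ->
  quad_hyponormal (mw_shift A) ->
  forall n : nat, (1 <= n)%N -> A n = A n.+1 ->
    (A n.-1 = A n /\ A n = A n.+1) \/ (A n = A n.+1 /\ A n.+1 = A n.+2).
Proof.
move=> _ hA _ qh [//|m] _ flat; right; split=> //=.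
apply/esym/posmx_sqr_inj; [exact: (hA _).1 | exact: (hA _).1 | exact: (hA _).2 |].
exact: quad_hyponormal_flat_sqr (fun k => (hA k).1.1) (fun k => (hA k).2) qh m flat.
Qed.
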